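(* Let $A$ (in $\mathcal H$) and $B$ (in $\mathcal K$) be closed densely defined operators with $A\dashv B$ via a bounded intertwining operator $T$. Assume that $D(B)\subseteq D(T^{-1})$ and $R(B)\subseteq D(T^{-1})$, where $D(T^{-1})=R(T)$. Then $\rho(A)\setminus\sigma_p(B)\subseteq\rho(B)\cup\sigma_c(B)$.
   Context: A bounded operator $T:\mathcal H\to\mathcal K$ is a bounded intertwining operator for $A$ and $B$ if $T D(A)\subseteq D(B)$ and $BT\xi=TA\xi$ for all $\xi\in D(A)$. $A\dashv B$ (quasi-similarity) means there is a bounded intertwining operator $T$ for $A$ and $B$ that is injective with densely defined inverse $T^{-1}$. Spectral notions: $\rho(A)$ = set of $\lambda$ with $A-\lambda I$ injective and $(A-\lambda I)^{-1}$ bounded everywhere defined; $\sigma_p$ = set of eigenvalues; $\sigma_c(B)$ = set of $\lambda$ with $B-\lambda I$ injective with dense range different from $\mathcal K$. *)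

From Stdlib Require Import Reals.
Open Scope R_scope.

Definition Cplx : Type := (R * R)%type.
Definition C0 : Cplx := (0, 0).
Definition C1 : Cplx := (1, 0).
Definition Cadd (z w : Cplx) : Cplx := (fst z + fst w, snd z + snd w).
Definition Cmul (z w : Cplx) : Cplx :=
  (fst z * fst w - snd z * snd w, fst z * snd w + snd z * fst w).
Definition Cconj (z : Cplx) : Cplx := (fst z, - snd z).

Record CHilbert := {
  hcar :> Type;
  hzero : hcar;
  hadd : hcar -> hcar -> hcar;
  hopp : hcar -> hcar;
  hscal : Cplx -> hcar -> hcar;
  hinner : hcar -> hcar -> Cplx;
  hadd_assoc : forall x y z, hadd x (hadd y z) = hadd (hadd x y) z;
  hadd_comm : forall x y, hadd x y = hadd y x;
  hadd_zero : forall x, hadd x hzero = x;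
  hadd_opp : forall x, hadd x (hopp x) = hzero;
  hscal_one : forall x, hscal C1 x = x;
  hscal_mul : forall a b x, hscal (Cmul a b) x = hscal a (hscal b x);
  hscal_addv : forall a x y, hscal a (hadd x y) = hadd (hscal a x) (hscal a y);
  hscal_adds : forall a b x, hscal (Cadd a b) x = hadd (hscal a x) (hscal b x);
  hinner_add : forall x y z, hinner (hadd x y) z = Cadd (hinner x z) (hinner y z);
  hinner_scal : forall a x y, hinner (hscal a x) y = Cmul a (hinner x y);
  hinner_conj : forall x y, hinner x y = Cconj (hinner y x);
  hinner_pos : forall x, 0 <= fst (hinner x x);
  hinner_def : forall x, hinner x x = C0 -> x = hzero;
  hcomplete : forall u : nat -> hcar,
    (forall eps, 0 < eps -> exists N, forall m n, (N <= m)%nat -> (N <= n)%nat ->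
       sqrt (fst (hinner (hadd (u m) (hopp (u n))) (hadd (u m) (hopp (u n))))) < eps) ->
    exists l, forall eps, 0 < eps -> exists N, forall n, (N <= n)%nat ->
       sqrt (fst (hinner (hadd (u n) (hopp l)) (hadd (u n) (hopp l)))) < eps
}.

Arguments hzero {_}. Arguments hadd {_}. Arguments hopp {_}.
Arguments hscal {_}. Arguments hinner {_}.

Definition hnorm {H : CHilbert} (x : H) : R := sqrt (fst (hinner x x)).
Definition hsub {H : CHilbert} (x y : H) : H := hadd x (hopp y).

Definition converges {H : CHilbert} (u : nat -> H) (l : H) : Prop :=
  forall eps, 0 < eps -> exists N, forall n, (N <= n)%nat -> hnorm (hsub (u n) l) < eps.

Definition dense {H : CHilbert} (S : H -> Prop) : Prop :=
  forall x eps, 0 < eps -> exists y, S y /\ hnorm (hsub x y) < eps.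

Section Ops.
Variable H K : CHilbert.

(** A (possibly unbounded) linear operator is a pair (D, A): a linear
    subspace D (its domain) and a map A, linear on D; values of A outside
    D are irrelevant. *)
Definition linear_op (D : H -> Prop) (A : H -> K) : Prop :=
  D hzero /\
  (forall x y, D x -> D y -> D (hadd x y) /\ A (hadd x y) = hadd (A x) (A y)) /\
  (forall a x, D x -> D (hscal a x) /\ A (hscal a x) = hscal a (A x)).

Definition closed_op (D : H -> Prop) (A : H -> K) : Prop :=
  forall (u : nat -> H) x y, (forall n, D (u n)) ->
    converges u x -> converges (fun n => A (u n)) y -> D x /\ A x = y.

Definition closed_densely_defined (D : H -> Prop) (A : H -> K) : Prop :=
  linear_op D A /\ closed_op D A /\ dense D.

Definition bounded_op (T : H -> K) : Prop :=
  linear_op (fun _ => True) T /\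
  exists M, forall x, hnorm (T x) <= M * hnorm x.

Definition intertwining (T : H -> K) (DA : H -> Prop) (A : H -> H)
  (DB : K -> Prop) (B : K -> K) : Prop :=
  bounded_op T /\ forall xi, DA xi -> DB (T xi) /\ B (T xi) = T (A xi).

Definition range (T : H -> K) : K -> Prop := fun y => exists x, T x = y.

(** A -| B via T: T is a bounded intertwining operator which is injective
    with densely defined inverse (D(T^-1) = R(T) dense). *)
Definition quasi_similar_via (T : H -> K) DA A DB B : Prop :=
  intertwining T DA A DB B /\ (forall x y, T x = T y -> x = y) /\ dense (range T).

End Ops.

Arguments range {_ _}.

Definition shift {H : CHilbert} (A : H -> H) (lam : Cplx) : H -> H :=
  fun x => hsub (A x) (hscal lam x).

Definition in_resolvent {H : CHilbert} (D : H -> Prop) (A : H -> H) (lam : Cplx) : Prop :=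
  (forall x y, D x -> D y -> shift A lam x = shift A lam y -> x = y) /\
  (forall y, exists x, D x /\ shift A lam x = y) /\
  (exists M, forall x, D x -> hnorm x <= M * hnorm (shift A lam x)).

Definition in_point_spectrum {H : CHilbert} (D : H -> Prop) (A : H -> H) (lam : Cplx) : Prop :=
  exists x, D x /\ x <> hzero /\ A x = hscal lam x.

Definition in_continuous_spectrum {H : CHilbert} (D : H -> Prop) (A : H -> H) (lam : Cplx) : Prop :=
  (forall x y, D x -> D y -> shift A lam x = shift A lam y -> x = y) /\
  dense (fun y => exists x, D x /\ shift A lam x = y) /\
  ~ (forall y, exists x, D x /\ shift A lam x = y).

From Pilot Require Import Defs.
From Stdlib Require Import Reals Lra Lia Classical ClassicalEpsilon FunctionalExtensionality.
Open Scope R_scope.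

(* Excluding sigma_p(B) makes B - lam injective, and since T (A - lam) xi = (B - lam) T xi with
   A - lam onto, the range of B - lam contains the dense set R(T).  So lam is in sigma_c(B) unless
   B - lam is onto; then B - lam is a closed bijection of D(B) onto K, and its inverse is bounded by
   the closed graph theorem, obtained from the Baire category theorem by successive approximation. *)

(** * Algebra of vectors and norms *)

Section VectorAlgebra.
Context {V : CHilbert}.
Implicit Types x y z a b c d : V.

Lemma hadd_0_l x : hadd hzero x = x.
Proof. rewrite hadd_comm; apply hadd_zero. Qed.

Lemma hadd_opp_l x : hadd (hopp x) x = hzero.
Proof. rewrite hadd_comm; apply hadd_opp. Qed.

Lemma hadd_reg_l a x y : hadd a x = hadd a y -> x = y.
Proof.
  intro E. rewrite <- (hadd_0_l x), <- (hadd_0_l y), <- (hadd_opp_l a), <- !hadd_assoc, E.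
  reflexivity.
Qed.

Lemma hopp_unique x y : hadd x y = hzero -> y = hopp x.
Proof. intro E; apply (hadd_reg_l x); rewrite E, hadd_opp; reflexivity. Qed.

Lemma hopp_involutive x : hopp (hopp x) = x.
Proof. symmetry; apply hopp_unique, hadd_opp_l. Qed.

Lemma hadd_permute_middle a b c d : hadd (hadd a b) (hadd c d) = hadd (hadd a c) (hadd b d).
Proof.
  rewrite <- hadd_assoc, (hadd_assoc _ b c d), (hadd_comm _ b c), <- hadd_assoc, hadd_assoc.
  reflexivity.
Qed.

Lemma hopp_add_distr x y : hopp (hadd x y) = hadd (hopp x) (hopp y).
Proof.
  symmetry; apply hopp_unique. rewrite hadd_permute_middle, !hadd_opp, hadd_zero; reflexivity.
Qed.

Lemma hopp_0 : hopp (@hzero V) = hzero.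
Proof. symmetry; apply hopp_unique, hadd_zero. Qed.

Lemma hsub_diag x : hsub x x = hzero.
Proof. apply hadd_opp. Qed.

Lemma hsub_0_r x : hsub x hzero = x.
Proof. unfold hsub; rewrite hopp_0, hadd_zero; reflexivity. Qed.

Lemma hsub_eq_0 x y : hsub x y = hzero -> x = y.
Proof. intro E; apply hopp_unique in E. rewrite <- (hopp_involutive y), E, hopp_involutive; reflexivity. Qed.

Lemma hopp_sub x y : hopp (hsub x y) = hsub y x.
Proof. unfold hsub; rewrite hopp_add_distr, hopp_involutive, hadd_comm; reflexivity. Qed.

Lemma hsub_add_distr a b c d : hsub (hadd a b) (hadd c d) = hadd (hsub a c) (hsub b d).
Proof. unfold hsub; rewrite hopp_add_distr, hadd_permute_middle; reflexivity. Qed.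

Lemma hsub_chain x y z : hsub x z = hadd (hsub x y) (hsub y z).
Proof. unfold hsub; rewrite <- hadd_assoc, (hadd_assoc _ (hopp y) y), hadd_opp_l, hadd_0_l; reflexivity. Qed.

Lemma hsub_add_cancel x y : hadd (hsub x y) y = x.
Proof. unfold hsub; rewrite <- hadd_assoc, hadd_opp_l, hadd_zero; reflexivity. Qed.

Lemma hadd_sub_cancel_l x y : hsub (hadd x y) x = y.
Proof. unfold hsub; rewrite hadd_comm, hadd_assoc, hadd_opp_l, hadd_0_l; reflexivity. Qed.

Lemma hsub_sub_cancel_l x y : hsub (hsub x y) x = hopp y.
Proof. unfold hsub; rewrite <- hadd_assoc, hadd_comm, <- hadd_assoc, hadd_opp_l, hadd_zero; reflexivity. Qed.

Lemma hsub_sub_r x y z : hsub x (hsub y z) = hadd (hsub x y) z.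
Proof. unfold hsub at 1. rewrite hopp_sub. unfold hsub. rewrite <- !hadd_assoc, (hadd_comm _ z); reflexivity. Qed.

Lemma hsub_sub_translate c x y z : hsub z (hsub x y) = hsub (hsub (hadd c z) x) (hsub c y).
Proof.
  rewrite hsub_sub_r. unfold hsub. rewrite !hopp_add_distr, !hopp_involutive.
  rewrite (hadd_comm _ (hopp c) y), hadd_permute_middle, (hadd_comm _ (hopp x) (hopp c)), hadd_permute_middle.
  change (hadd (hadd c z) (hopp c)) with (hsub (hadd c z) c). rewrite hadd_sub_cancel_l.
  rewrite <- hadd_assoc, (hadd_comm _ (hopp x) y). reflexivity.
Qed.

Lemma hscal_0_l x : hscal C0 x = hzero.
Proof.
  apply (hadd_reg_l (hscal C0 x)). rewrite <- hscal_adds, hadd_zero.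
  f_equal; unfold Cadd, C0; simpl; f_equal; ring.
Qed.

Lemma hscal_0_r s : hscal s (@hzero V) = hzero.
Proof.
  apply (hadd_reg_l (hscal s hzero)). rewrite <- hscal_addv, !hadd_zero; reflexivity.
Qed.

Lemma hscal_minus_one x : hscal (-1, 0) x = hopp x.
Proof.
  apply hopp_unique. rewrite <- (hscal_one _ x) at 1. rewrite <- hscal_adds.
  replace (Cadd Defs.C1 (-1, 0)) with C0 by (unfold Cadd, Defs.C1, C0; simpl; f_equal; ring).
  apply hscal_0_l.
Qed.

Lemma hscal_opp_r s x : hscal s (hopp x) = hopp (hscal s x).
Proof. apply hopp_unique. rewrite <- hscal_addv, hadd_opp, hscal_0_r; reflexivity. Qed.

Lemma hscal_sub_distr s x y : hscal s (hsub x y) = hsub (hscal s x) (hscal s y).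
Proof. unfold hsub; rewrite hscal_addv, hscal_opp_r; reflexivity. Qed.

Lemma hscal_comm s r x : hscal s (hscal r x) = hscal r (hscal s x).
Proof. rewrite <- !hscal_mul. f_equal. destruct s, r; unfold Cmul; simpl; f_equal; ring. Qed.

Lemma hscal_real_inv t x : t <> 0 -> hscal (/ t, 0) (hscal (t, 0) x) = x.
Proof.
  intro Ht. rewrite <- hscal_mul.
  replace (Cmul (/ t, 0) (t, 0)) with Defs.C1 by (unfold Cmul, Defs.C1; simpl; f_equal; field; auto).
  apply hscal_one.
Qed.

End VectorAlgebra.

Definition Cnorm (s : Cplx) : R := sqrt (fst s * fst s + snd s * snd s).

Lemma quadratic_nonneg_discriminant p q w :
  0 <= w -> (forall t, 0 <= p + 2 * q * t + w * t * t) -> q * q <= p * w.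
Proof.
  intros Hw Hq. destruct (Req_dec w 0) as [->|Hw0].
  - destruct (Req_dec q 0) as [->|Hq0]; [lra|].
    specialize (Hq (- (Rabs p + 1) / (2 * q))).
    assert (2 * q * (- (Rabs p + 1) / (2 * q)) = - (Rabs p + 1)) by (field; auto).
    pose proof (Rle_abs p). nra.
  - specialize (Hq (- q / w)).
    assert (E : p + 2 * q * (- q / w) + w * (- q / w) * (- q / w) = (p * w - q * q) / w)
      by (field; auto).
    rewrite E in Hq. apply Rmult_le_compat_r with (r := w) in Hq; [|lra].
    unfold Rdiv in Hq; rewrite Rmult_assoc, Rinv_l in Hq by lra. lra.
Qed.

Section Norm.
Context {V : CHilbert}.
Implicit Types x y z : V.

Definition hsqnorm x : R := fst (hinner x x).

Lemma hinner_0_l y : hinner (@hzero V) y = C0.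
Proof.
  pose proof (hinner_add _ hzero hzero y) as E. rewrite hadd_zero in E.
  destruct (hinner hzero y) as [p q]. unfold Cadd in E; simpl in E.
  injection E; intros; unfold C0; f_equal; lra.
Qed.

Lemma hinner_diag_real x : snd (hinner x x) = 0.
Proof.
  pose proof (hinner_conj _ x x) as E. destruct (hinner x x) as [p q].
  unfold Cconj in E; simpl in *. injection E; intros; lra.
Qed.

Lemma hinner_add_r x y z : hinner x (hadd y z) = Cadd (hinner x y) (hinner x z).
Proof.
  rewrite (hinner_conj _ x (hadd y z)), hinner_add, (hinner_conj _ x y), (hinner_conj _ x z).
  destruct (hinner y x), (hinner z x); unfold Cconj, Cadd; simpl; f_equal; ring.
Qed.

Lemma hinner_scal_r s x y : hinner x (hscal s y) = Cmul (Cconj s) (hinner x y).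
Proof.
  rewrite (hinner_conj _ x (hscal s y)), hinner_scal, (hinner_conj _ x y).
  destruct (hinner y x), s; unfold Cconj, Cmul; simpl; f_equal; ring.
Qed.

Lemma hinner_re_sym x y : fst (hinner x y) = fst (hinner y x).
Proof. rewrite (hinner_conj _ x y). destruct (hinner y x); reflexivity. Qed.

Lemma hsqnorm_add x y : hsqnorm (hadd x y) = hsqnorm x + hsqnorm y + 2 * fst (hinner x y).
Proof.
  unfold hsqnorm. rewrite hinner_add, !hinner_add_r. simpl. rewrite (hinner_re_sym y x). ring.
Qed.

Lemma hsqnorm_scal s x :
  hsqnorm (hscal s x) = (fst s * fst s + snd s * snd s) * hsqnorm x.
Proof.
  unfold hsqnorm. rewrite hinner_scal, hinner_scal_r. pose proof (hinner_diag_real x) as Q.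
  destruct (hinner x x) as [p q], s as [s1 s2]; simpl in *; subst. ring.
Qed.

Lemma cauchy_schwarz x y : fst (hinner x y) * fst (hinner x y) <= hsqnorm x * hsqnorm y.
Proof.
  apply quadratic_nonneg_discriminant; [apply hinner_pos|]. intro t.
  pose proof (hinner_pos _ (hadd x (hscal (t, 0) y))) as P. fold (hsqnorm (hadd x (hscal (t, 0) y))) in P.
  rewrite hsqnorm_add, hsqnorm_scal, hinner_scal_r in P.
  destruct (hinner x y) as [p q]; simpl in *. nra.
Qed.

Lemma hnorm_ge_0 x : 0 <= hnorm x.
Proof. apply sqrt_pos. Qed.

Lemma hnorm_sqr x : hnorm x * hnorm x = hsqnorm x.
Proof. apply sqrt_sqrt, hinner_pos. Qed.

Lemma hnorm_triang x y : hnorm (hadd x y) <= hnorm x + hnorm y.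
Proof.
  pose proof (hnorm_ge_0 x); pose proof (hnorm_ge_0 y).
  assert (Hxy : fst (hinner x y) <= hnorm x * hnorm y).
  { pose proof (cauchy_schwarz x y) as CS. rewrite <- !hnorm_sqr in CS.
    pose proof (Rmult_le_pos _ _ H H0). nra. }
  unfold hnorm at 1. rewrite <- (sqrt_square (hnorm x + hnorm y)) by lra.
  apply sqrt_le_1_alt. fold (hsqnorm (hadd x y)). rewrite hsqnorm_add, <- !hnorm_sqr. nra.
Qed.

Lemma hnorm_scal s x : hnorm (hscal s x) = Cnorm s * hnorm x.
Proof.
  unfold hnorm. fold (hsqnorm (hscal s x)). rewrite hsqnorm_scal. apply sqrt_mult_alt. nra.
Qed.

Lemma hnorm_scal_real t x : hnorm (hscal (t, 0) x) = Rabs t * hnorm x.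
Proof.
  rewrite hnorm_scal. unfold Cnorm; simpl.
  replace (t * t + 0 * 0) with (Rsqr t) by (unfold Rsqr; ring). rewrite sqrt_Rsqr_abs; reflexivity.
Qed.

Lemma hnorm_opp x : hnorm (hopp x) = hnorm x.
Proof.
  rewrite <- hscal_minus_one, hnorm_scal_real.
  replace (Rabs (-1)) with 1 by (rewrite Rabs_left; lra). ring.
Qed.

Lemma hnorm_0 : hnorm (@hzero V) = 0.
Proof. unfold hnorm. rewrite hinner_0_l. apply sqrt_0. Qed.

Lemma hnorm_eq_0 x : hnorm x = 0 -> x = hzero.
Proof.
  intro E. apply hinner_def. apply sqrt_eq_0 in E; [|apply hinner_pos].
  pose proof (hinner_diag_real x). destruct (hinner x x); simpl in *; subst; reflexivity.
Qed.

Lemma hnorm_sub_sym x y : hnorm (hsub x y) = hnorm (hsub y x).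
Proof. rewrite <- hopp_sub, hnorm_opp; reflexivity. Qed.

Lemma hnorm_sub_triang x y z : hnorm (hsub x z) <= hnorm (hsub x y) + hnorm (hsub y z).
Proof. rewrite (hsub_chain x y z). apply hnorm_triang. Qed.

Lemma hnorm_sub_le x y : hnorm (hsub x y) <= hnorm x + hnorm y.
Proof. unfold hsub. rewrite <- (hnorm_opp y). apply hnorm_triang. Qed.

End Norm.

Lemma Rle_of_forall_lt_plus a b : (forall d, 0 < d -> a < b + d) -> a <= b.
Proof. intro Hd. destruct (Rle_or_lt a b) as [|Hab]; auto. specialize (Hd ((a - b) / 2)). lra. Qed.

Lemma half_pow_small eps : 0 < eps -> exists N, (/ 2) ^ N < eps.
Proof.
  intro He. destruct (pow_lt_1_zero (/ 2)) with (y := eps) as [N HN]; auto.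
  - rewrite Rabs_pos_eq; lra.
  - exists N. specialize (HN N (le_n N)). rewrite Rabs_pos_eq in HN; auto. apply pow_le; lra.
Qed.

Lemma half_pow_le N n : (N <= n)%nat -> (/ 2) ^ n <= (/ 2) ^ N.
Proof.
  induction 1 as [|n _ IH]; [lra|]. simpl. pose proof (pow_le (/ 2) n ltac:(lra)). lra.
Qed.

Section Sequences.
Context {V : CHilbert}.
Implicit Types u : nat -> V.

Lemma converges_geometric u l a :
  (forall n, hnorm (hsub (u n) l) <= a * (/ 2) ^ n) -> converges u l.
Proof.
  intros Hu eps He. destruct (half_pow_small (eps / (Rabs a + 1))) as [N HN].
  { apply Rdiv_lt_0_compat; [lra|]. pose proof (Rabs_pos a); lra. }
  exists N. intros n Hn. pose proof (half_pow_le N n Hn). pose proof (pow_le (/ 2) n ltac:(lra)).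
  pose proof (Rle_abs a). pose proof (Rabs_pos a).
  apply Rmult_lt_compat_r with (r := Rabs a + 1) in HN; [|lra].
  replace (eps / (Rabs a + 1) * (Rabs a + 1)) with eps in HN by (field; lra).
  specialize (Hu n). nra.
Qed.

Lemma converges_add u v a b :
  converges u a -> converges v b -> converges (fun n => hadd (u n) (v n)) (hadd a b).
Proof.
  intros Hu Hv eps He.
  destruct (Hu (eps / 2)) as [N1 HN1]; [lra|]. destruct (Hv (eps / 2)) as [N2 HN2]; [lra|].
  exists (N1 + N2)%nat. intros n Hn. rewrite hsub_add_distr.
  specialize (HN1 n ltac:(lia)). specialize (HN2 n ltac:(lia)).
  pose proof (hnorm_triang (hsub (u n) a) (hsub (v n) b)). lra.
Qed.

Lemma converges_scal s u a : converges u a -> converges (fun n => hscal s (u n)) (hscal s a).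
Proof.
  intros Hu eps He. assert (Hs : 0 <= Cnorm s) by apply sqrt_pos.
  destruct (Hu (eps / (Cnorm s + 1))) as [N HN]; [apply Rdiv_lt_0_compat; lra|].
  exists N. intros n Hn. specialize (HN n Hn).
  rewrite <- hscal_sub_distr, hnorm_scal. pose proof (hnorm_ge_0 (hsub (u n) a)).
  apply Rmult_lt_compat_r with (r := Cnorm s + 1) in HN; [|lra].
  replace (eps / (Cnorm s + 1) * (Cnorm s + 1)) with eps in HN by (field; lra). nra.
Qed.

Lemma limit_dist_le u l c b k :
  converges u l -> (forall n, (k <= n)%nat -> hnorm (hsub (u n) c) <= b) ->
  hnorm (hsub l c) <= b.
Proof.
  intros Hu Hb. apply Rle_of_forall_lt_plus. intros d Hd. destruct (Hu d Hd) as [N HN].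
  specialize (HN (N + k)%nat ltac:(lia)). specialize (Hb (N + k)%nat ltac:(lia)).
  rewrite hnorm_sub_sym in HN. pose proof (hnorm_sub_triang l (u (N + k)%nat) c). lra.
Qed.

Section GeometricSteps.
Variables (u : nat -> V) (a : R).
Hypothesis steps : forall k, hnorm (hsub (u (S k)) (u k)) <= a * (/ 2) ^ k.

Lemma geometric_steps_dist_le j k :
  hnorm (hsub (u (j + k)%nat) (u k)) <= 2 * a * ((/ 2) ^ k - (/ 2) ^ (j + k)).
Proof.
  induction j as [|j IH].
  - simpl. rewrite hsub_diag, hnorm_0. lra.
  - pose proof (hnorm_sub_triang (u (S j + k)%nat) (u (j + k)%nat) (u k)).
    specialize (steps (j + k)%nat). simpl in *. lra.
Qed.

Lemma geometric_steps_bound j k : hnorm (hsub (u (j + k)%nat) (u k)) <= 2 * a * (/ 2) ^ k.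
Proof.
  assert (Ha : 0 <= a).
  { specialize (steps 0%nat). pose proof (hnorm_ge_0 (hsub (u 1%nat) (u 0%nat))). simpl in *. lra. }
  pose proof (geometric_steps_dist_le j k). pose proof (pow_le (/ 2) (j + k) ltac:(lra)). nra.
Qed.

Lemma geometric_steps_converge : exists l, converges u l.
Proof.
  apply hcomplete. intros eps He. destruct (half_pow_small (eps / (4 * Rabs a + 1))) as [N HN].
  { apply Rdiv_lt_0_compat; [|pose proof (Rabs_pos a)]; lra. }
  exists N. intros m n Hm Hn.
  pose proof (geometric_steps_bound (m - N) N) as Bm. pose proof (geometric_steps_bound (n - N) N) as Bn.
  replace (m - N + N)%nat with m in Bm by lia. replace (n - N + N)%nat with n in Bn by lia.
  pose proof (hnorm_sub_triang (u m) (u N) (u n)) as Tri. rewrite (hnorm_sub_sym (u N)) in Tri.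
  pose proof (Rle_abs a). pose proof (Rabs_pos a). pose proof (pow_le (/ 2) N ltac:(lra)).
  apply Rmult_lt_compat_r with (r := 4 * Rabs a + 1) in HN; [|lra].
  replace (eps / (4 * Rabs a + 1) * (4 * Rabs a + 1)) with eps in HN by (field; lra).
  change (hnorm (hsub (u m) (u n)) < eps). nra.
Qed.

End GeometricSteps.

Lemma nested_balls_limit (c : nat -> V) (r : nat -> R) :
  (forall k, 0 < r k) -> (forall k, hnorm (hsub (c (S k)) (c k)) + r (S k) <= r k) ->
  (forall k, r k <= (/ 2) ^ k) -> exists l, forall k, hnorm (hsub l (c k)) <= r k.
Proof.
  intros Hpos Hnest Hsmall.
  assert (Hchain : forall j k, hnorm (hsub (c (j + k)%nat) (c k)) + r (j + k)%nat <= r k).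
  { induction j as [|j IH]; intro k; simpl.
    - rewrite hsub_diag, hnorm_0. lra.
    - pose proof (IH k). pose proof (Hnest (j + k)%nat).
      pose proof (hnorm_sub_triang (c (S (j + k))) (c (j + k)%nat) (c k)). lra. }
  destruct (geometric_steps_converge c 1) as [l Hl].
  { intro k. pose proof (Hnest k). pose proof (Hpos (S k)). pose proof (Hsmall k). lra. }
  exists l. intro k. apply (limit_dist_le c l (c k) (r k) k Hl). intros n Hn.
  pose proof (Hchain (n - k)%nat k). pose proof (Hpos n). replace (n - k + k)%nat with n in * by lia. lra.
Qed.

End Sequences.

(** * Baire category and closed graph theorems *)

Section Baire.
Context {V : CHilbert}.

Lemma cantor_nested_balls (F : nat -> V -> R -> Prop) :
  (forall k c r, 0 < r -> exists c' r', hnorm (hsub c' c) < r /\ 0 < r' /\ F k c' r') ->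
  exists l, forall k, exists c r, F k c r /\ hnorm (hsub l c) < r.
Proof.
  intro Hstep.
  assert (Hstep' : forall k c r, exists p : V * R,
    0 < r -> hnorm (hsub (fst p) c) < r /\ 0 < snd p /\ F k (fst p) (snd p)).
  { intros k c r. destruct (Rlt_dec 0 r) as [Hr|Hr].
    - destruct (Hstep k c r Hr) as [c' [r' Hc']]. exists (c', r'); auto.
    - exists (c, 1). intro; lra. }
  set (f := fun k c r => proj1_sig (constructive_indefinite_description _ (Hstep' k c r))).
  assert (Hf : forall k c r, 0 < r ->
    hnorm (hsub (fst (f k c r)) c) < r /\ 0 < snd (f k c r) /\ F k (fst (f k c r)) (snd (f k c r))).
  { intros k c r. exact (proj2_sig (constructive_indefinite_description _ (Hstep' k c r))). }
  (* Shrink each new ball so that its closure lies in the old one and in the ball given by [f]. *)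
  set (s := nat_rect (fun _ => (V * R)%type) (hzero, 1) (fun k p =>
    let q := f k (fst p) (snd p) in
    (fst q, Rmin (snd q) (snd p - hnorm (hsub (fst q) (fst p))) / 2))).
  set (c := fun k => fst (s k)). set (r := fun k => snd (s k)).
  assert (Hc : forall k, c (S k) = fst (f k (c k) (r k))) by reflexivity.
  assert (Hr : forall k, r (S k) = Rmin (snd (f k (c k) (r k))) (r k - hnorm (hsub (c (S k)) (c k))) / 2)
    by reflexivity.
  assert (Hpos : forall k, 0 < r k).
  { induction k as [|k IH]; [unfold r; simpl; lra|].
    rewrite Hr. destruct (Hf k (c k) (r k) IH) as [Hd [Hr' _]]. rewrite <- Hc in Hd.
    apply Rmin_case; lra. }
  assert (Hnest : forall k, hnorm (hsub (c (S k)) (c k)) + r (S k) <= r k).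
  { intro k. destruct (Hf k (c k) (r k) (Hpos k)) as [Hd _]. rewrite <- Hc in Hd.
    rewrite Hr. pose proof (Rmin_r (snd (f k (c k) (r k))) (r k - hnorm (hsub (c (S k)) (c k)))). lra. }
  destruct (nested_balls_limit c r) as [l Hl]; auto.
  { induction k as [|k IH]; [unfold r; simpl; lra|].
    rewrite Hr. pose proof (Rmin_r (snd (f k (c k) (r k))) (r k - hnorm (hsub (c (S k)) (c k)))).
    pose proof (hnorm_ge_0 (hsub (c (S k)) (c k))). simpl. lra. }
  exists l. intro k. exists (c (S k)), (snd (f k (c k) (r k))).
  destruct (Hf k (c k) (r k) (Hpos k)) as [_ [Hr' HF]]. rewrite <- Hc in HF. split; auto.
  pose proof (Hl (S k)). rewrite Hr in *.
  pose proof (Rmin_l (snd (f k (c k) (r k))) (r k - hnorm (hsub (c (S k)) (c k)))). lra.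
Qed.

Lemma baire (E : nat -> V -> Prop) : (forall y, exists n, E n y) ->
  exists n c r, 0 < r /\ forall z, hnorm (hsub z c) < r -> forall eps, 0 < eps ->
    exists e, E n e /\ hnorm (hsub z e) < eps.
Proof.
  intro Hcov. apply NNPP; intro Hnowhere.
  destruct (cantor_nested_balls (fun n c r => forall e, E n e -> r <= hnorm (hsub c e))) as [l Hl].
  - intros n c r Hr. apply NNPP; intro Hno; apply Hnowhere. exists n, c, r; split; auto.
    intros z Hz eps Heps. apply NNPP; intro Hne; apply Hno. exists z, eps; repeat split; auto.
    intros e He; apply Rnot_lt_le; intro; apply Hne; exists e; auto.
  - destruct (Hcov l) as [n Hn]. destruct (Hl n) as [c [r [Hc Hlc]]].
    specialize (Hc l Hn). rewrite hnorm_sub_sym in Hlc. lra.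
Qed.

End Baire.

Section ClosedGraph.
Context {V W : CHilbert}.
Variable P : V -> W -> Prop.
Hypothesis P_total : forall y, exists x, P y x.
Hypothesis P_add : forall y1 x1 y2 x2, P y1 x1 -> P y2 x2 -> P (hadd y1 y2) (hadd x1 x2).
Hypothesis P_scal : forall t y x, P y x -> P (hscal (t, 0) y) (hscal (t, 0) x).
Hypothesis P_0 : forall x, P hzero x -> x = hzero.
Hypothesis P_closed : forall u v y x,
  (forall n, P (u n) (v n)) -> converges u y -> converges v x -> P y x.

Lemma P_0_0 : P hzero hzero.
Proof.
  destruct (P_total hzero) as [x Hx]. pose proof (P_scal 0 _ _ Hx) as E.
  rewrite !hscal_0_l in E. exact E.
Qed.

Lemma P_sub y1 x1 y2 x2 : P y1 x1 -> P y2 x2 -> P (hsub y1 y2) (hsub x1 x2).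
Proof. intros H1 H2. unfold hsub. rewrite <- !hscal_minus_one. apply P_add; auto. Qed.

Lemma P_functional y x1 x2 : P y x1 -> P y x2 -> x1 = x2.
Proof. intros H1 H2. apply hsub_eq_0, P_0. rewrite <- (hsub_diag y). apply P_sub; auto. Qed.

(* By Baire, the sets [{y | exists x, P y x /\ |x| <= n}] cover [V], so one of them is dense in
   a ball [B(c, r)]; differences of approximations at [c + z] and at [c] handle every [|z| < r]. *)
Lemma approx_in_ball : exists C r, 0 <= C /\ 0 < r /\ forall z eps, hnorm z < r -> 0 < eps ->
  exists y' x', P y' x' /\ hnorm x' <= C /\ hnorm (hsub z y') < eps.
Proof.
  destruct (baire (fun n y => exists x, P y x /\ hnorm x <= INR n)) as [n [c [r [Hr Hd]]]].
  { intro y. destruct (P_total y) as [x Hx]. destruct (INR_unbounded (hnorm x)) as [n Hn].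
    exists n, x; split; auto; lra. }
  exists (2 * INR n), r. split; [pose proof (pos_INR n); lra|]. split; auto.
  intros z eps Hz He.
  destruct (Hd (hadd c z) ltac:(rewrite hadd_sub_cancel_l; auto) (eps / 2) ltac:(lra))
    as [e1 [[x1 [P1 N1]] D1]].
  destruct (Hd c ltac:(rewrite hsub_diag, hnorm_0; auto) (eps / 2) ltac:(lra))
    as [e2 [[x2 [P2 N2]] D2]].
  exists (hsub e1 e2), (hsub x1 x2). split; [apply P_sub; auto|]. split.
  - pose proof (hnorm_sub_le x1 x2). lra.
  - rewrite (hsub_sub_translate c). pose proof (hnorm_sub_le (hsub (hadd c z) e1) (hsub c e2)). lra.
Qed.

Lemma approx_everywhere : exists K, 0 <= K /\ forall y eps, 0 < eps ->
  exists y' x', P y' x' /\ hnorm x' <= K * hnorm y /\ hnorm (hsub y y') < eps.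
Proof.
  destruct approx_in_ball as [C [r [HC [Hr Happ]]]].
  assert (Hr' : 0 < / r) by (apply Rinv_0_lt_compat; auto).
  exists (2 * C / r). split; [unfold Rdiv; apply Rmult_le_pos; lra|].
  intros y eps He. destruct (Req_dec (hnorm y) 0) as [Hy|Hy].
  { apply hnorm_eq_0 in Hy; subst. exists hzero, hzero. rewrite hsub_0_r, !hnorm_0.
    split; [apply P_0_0|lra]. }
  pose proof (hnorm_ge_0 y). set (t := r / (2 * hnorm y)).
  assert (Ht : 0 < t) by (unfold t; apply Rdiv_lt_0_compat; lra).
  assert (Ht' : 0 < / t) by (apply Rinv_0_lt_compat; auto).
  destruct (Happ (hscal (t, 0) y) (t * eps)) as [y' [x' [Pyx [Hx Hd]]]].
  { rewrite hnorm_scal_real, Rabs_pos_eq by lra. unfold t.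
    replace (r / (2 * hnorm y) * hnorm y) with (r / 2) by (field; lra). lra. }
  { nra. }
  exists (hscal (/ t, 0) y'), (hscal (/ t, 0) x'). split; [apply P_scal; auto|]. split.
  - rewrite hnorm_scal_real, Rabs_pos_eq by lra.
    replace (2 * C / r * hnorm y) with (/ t * C) by (unfold t; field; lra).
    apply Rmult_le_compat_l; lra.
  - rewrite <- (hscal_real_inv t y) at 1 by lra.
    rewrite <- hscal_sub_distr, hnorm_scal_real, Rabs_pos_eq by lra.
    apply Rmult_lt_compat_l with (r := / t) in Hd; auto.
    replace (/ t * (t * eps)) with eps in Hd by (field; lra). exact Hd.
Qed.

(* Approximate the remainder left by the previous steps to within [|y| / 2^(k+1)]; the partial
   sums of the corresponding preimages then form a convergent series. *)
Lemma successive_approximation : exists K, 0 <= K /\ forall y, 0 < hnorm y ->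
  exists (u : nat -> V) (v : nat -> W) l,
    (forall n, P (u n) (v n)) /\ converges u y /\ converges v l /\ hnorm l <= K * hnorm y.
Proof.
  destruct approx_everywhere as [K [HK Happ]]. exists (2 * K). split; [lra|]. intros y Hy.
  assert (Hg : forall k w, exists p : V * W, P (fst p) (snd p) /\
    hnorm (snd p) <= K * hnorm w /\ hnorm (hsub w (fst p)) < hnorm y * (/ 2) ^ S k).
  { intros k w. destruct (Happ w (hnorm y * (/ 2) ^ S k)) as [y' [x' Hyx]].
    - apply Rmult_lt_0_compat; [lra|apply pow_lt; lra].
    - exists (y', x'); exact Hyx. }
  set (g := fun k w => proj1_sig (constructive_indefinite_description _ (Hg k w))).
  assert (Hgs : forall k w, P (fst (g k w)) (snd (g k w)) /\
    hnorm (snd (g k w)) <= K * hnorm w /\ hnorm (hsub w (fst (g k w))) < hnorm y * (/ 2) ^ S k).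
  { intros k w. exact (proj2_sig (constructive_indefinite_description _ (Hg k w))). }
  set (s := nat_rect (fun _ => (V * W)%type) (y, hzero) (fun k p =>
    let q := g k (fst p) in (hsub (fst p) (fst q), hadd (snd p) (snd q)))).
  set (u := fun n => hsub y (fst (s n))). set (v := fun n => snd (s n)).
  assert (Hrem : forall k, hnorm (fst (s k)) <= hnorm y * (/ 2) ^ k).
  { induction k as [|k IH]; [simpl; lra|].
    destruct (Hgs k (fst (s k))) as [_ [_ Hd]].
    change (fst (s (S k))) with (hsub (fst (s k)) (fst (g k (fst (s k))))). lra. }
  assert (HP : forall n, P (u n) (v n)).
  { induction n as [|n IH]; unfold u, v in *; simpl.
    - rewrite hsub_diag. apply P_0_0.
    - rewrite hsub_sub_r. apply P_add; auto. apply Hgs. }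
  assert (Hsteps : forall k, hnorm (hsub (v (S k)) (v k)) <= K * hnorm y * (/ 2) ^ k).
  { intro k. unfold v; simpl. rewrite hadd_sub_cancel_l.
    destruct (Hgs k (fst (s k))) as [_ [Hx _]]. pose proof (Hrem k).
    rewrite Rmult_assoc. eapply Rle_trans; [apply Hx|]. apply Rmult_le_compat_l; auto. }
  destruct (geometric_steps_converge v _ Hsteps) as [l Hl].
  exists u, v, l. repeat split; auto.
  - apply (converges_geometric u y (hnorm y)). intro n. unfold u.
    rewrite hsub_sub_cancel_l, hnorm_opp. apply Hrem.
  - rewrite <- (hsub_0_r l). apply (limit_dist_le v l hzero _ 0 Hl). intros n _.
    pose proof (geometric_steps_bound v _ Hsteps n 0) as Hb.
    rewrite Nat.add_0_r in Hb. change (v 0%nat) with (@hzero W) in Hb. simpl in Hb. lra.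
Qed.

Theorem closed_graph : exists M, forall y x, P y x -> hnorm x <= M * hnorm y.
Proof.
  destruct successive_approximation as [K [HK Hsa]]. exists K. intros y x Hyx.
  destruct (Req_dec (hnorm y) 0) as [Hy|Hy].
  - apply hnorm_eq_0 in Hy; subst. rewrite (P_0 x Hyx), !hnorm_0. lra.
  - destruct (Hsa y) as [u [v [l [HP [Hu [Hv Hl]]]]]]; [pose proof (hnorm_ge_0 y); lra|].
    rewrite (P_functional y x l Hyx (P_closed u v y l HP Hu Hv)). exact Hl.
Qed.

End ClosedGraph.

(** * Shifted operators and the spectrum *)

Section LinearOp.
Context {V W : CHilbert}.
Variables (D : V -> Prop) (L : V -> W).
Hypothesis HL : linear_op V W D L.

Lemma lin_add x y : D x -> D y -> D (hadd x y) /\ L (hadd x y) = hadd (L x) (L y).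
Proof. destruct HL as [_ [Hadd _]]; auto. Qed.

Lemma lin_scal s x : D x -> D (hscal s x) /\ L (hscal s x) = hscal s (L x).
Proof. destruct HL as [_ [_ Hscal]]; auto. Qed.

Lemma lin_sub x y : D x -> D y -> D (hsub x y) /\ L (hsub x y) = hsub (L x) (L y).
Proof.
  intros Dx Dy. unfold hsub. rewrite <- !hscal_minus_one.
  destruct (lin_scal (-1, 0) y Dy) as [D1 E1]. destruct (lin_add x _ Dx D1) as [D2 E2].
  rewrite E2, E1. auto.
Qed.

Lemma lin_0 : D hzero /\ L hzero = hzero.
Proof.
  destruct HL as [D0 _]. split; auto.
  apply (hadd_reg_l (L hzero)). rewrite <- (proj2 (lin_add _ _ D0 D0)), !hadd_zero. reflexivity.
Qed.

Theorem bounded_inverse : closed_op V W D L ->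
  (forall x y, D x -> D y -> L x = L y -> x = y) -> (forall y, exists x, D x /\ L x = y) ->
  exists M, forall x, D x -> hnorm x <= M * hnorm (L x).
Proof.
  intros Hclosed Hinj Hsurj.
  destruct (closed_graph (fun y x => D x /\ L x = y)) as [M HM]; auto.
  - intros y1 x1 y2 x2 [D1 <-] [D2 <-]. apply lin_add; auto.
  - intros t y x [Dx <-]. apply lin_scal; auto.
  - intros x [Dx Ex]. destruct lin_0 as [D0 L0]. apply Hinj; auto. rewrite Ex, L0; reflexivity.
  - intros u v y x Huv Hu Hv. apply (Hclosed v x y); [intro n; apply Huv|auto|].
    replace (fun n => L (v n)) with u; auto.
    apply functional_extensionality; intro n; symmetry; apply Huv.
  - exists M. intros x Dx. apply HM. auto.
Qed.

End LinearOp.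

Section Shift.
Context {V : CHilbert}.
Variables (D : V -> Prop) (B : V -> V) (lam : Cplx).
Hypothesis HB : linear_op V V D B.

Lemma shift_linear : linear_op V V D (shift B lam).
Proof.
  split; [|split].
  - apply (lin_0 D B HB).
  - intros x y Dx Dy. destruct (lin_add D B HB x y Dx Dy) as [Dxy Exy]. split; auto.
    unfold shift. rewrite Exy, hscal_addv. apply hsub_add_distr.
  - intros s x Dx. destruct (lin_scal D B HB s x Dx) as [Dsx Esx]. split; auto.
    unfold shift. rewrite Esx, hscal_sub_distr, hscal_comm. reflexivity.
Qed.

Lemma shift_closed : closed_op V V D B -> closed_op V V D (shift B lam).
Proof.
  intros Hclosed u x y Du Hu Hsh.
  assert (HBu : converges (fun n => B (u n)) (hadd y (hscal lam x))).
  { replace (fun n => B (u n)) with (fun n => hadd (shift B lam (u n)) (hscal lam (u n))).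
    - apply converges_add; [exact Hsh|apply converges_scal, Hu].
    - apply functional_extensionality; intro n. apply hsub_add_cancel. }
  destruct (Hclosed u x _ Du Hu HBu) as [Dx Bx]. split; auto.
  unfold shift. rewrite Bx, hadd_comm. apply hadd_sub_cancel_l.
Qed.

Lemma shift_injective_of_not_eigenvalue : ~ in_point_spectrum D B lam ->
  forall x y, D x -> D y -> shift B lam x = shift B lam y -> x = y.
Proof.
  intros Hnp x y Dx Dy E. apply hsub_eq_0, NNPP; intro Hne. apply Hnp.
  destruct (lin_sub D _ shift_linear x y Dx Dy) as [Dxy Exy].
  exists (hsub x y). repeat split; auto. apply hsub_eq_0.
  change (shift B lam (hsub x y) = hzero). rewrite Exy, E. apply hsub_diag.
Qed.

End Shift.

Lemma intertwining_shift (H K : CHilbert) T DA A DB B lam :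
  intertwining H K T DA A DB B ->
  forall xi, DA xi -> DB (T xi) /\ shift B lam (T xi) = T (shift A lam xi).
Proof.
  intros [[HT _] HTA] xi Dxi. destruct (HTA xi Dxi) as [DTxi BTxi]. split; auto.
  unfold shift. rewrite BTxi, (proj2 (lin_sub _ T HT (A xi) (hscal lam xi) I I)).
  rewrite (proj2 (lin_scal _ T HT lam xi I)). reflexivity.
Qed.

Lemma shift_range_dense_of_intertwining (H K : CHilbert) T DA A DB B lam :
  intertwining H K T DA A DB B -> dense (range T) ->
  (forall y, exists x, DA x /\ shift A lam x = y) ->
  dense (fun y => exists x, DB x /\ shift B lam x = y).
Proof.
  intros HT Hdense Honto y eps He. destruct (Hdense y eps He) as [_ [[z <-] Hz]].
  destruct (Honto z) as [w [Dw <-]]. exists (T (shift A lam w)). split; auto.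
  exists (T w). apply (intertwining_shift H K T DA A DB B lam HT w Dw).
Qed.

Theorem corollary3p13 (H K : CHilbert) (DA : H -> Prop) (A : H -> H)
  (DB : K -> Prop) (B : K -> K) (T : H -> K) :
  closed_densely_defined H H DA A ->
  closed_densely_defined K K DB B ->
  quasi_similar_via H K T DA A DB B ->
  (forall y, DB y -> range T y) ->
  (forall y, DB y -> range T (B y)) ->
  forall lam : Cplx,
    in_resolvent DA A lam -> ~ in_point_spectrum DB B lam ->
    in_resolvent DB B lam \/ in_continuous_spectrum DB B lam.
Proof.
  intros _ [HB [HBclosed _]] [HT [_ HTdense]] _ _ lam [_ [HAonto _]] Hnp.
  pose proof (shift_injective_of_not_eigenvalue DB B lam HB Hnp) as Hinj.
  destruct (classic (forall y, exists x, DB x /\ shift B lam x = y)) as [Honto|Hnonto].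
  - left. repeat split; auto.
    apply bounded_inverse; auto using shift_linear, shift_closed.
  - right. repeat split; auto.
    apply (shift_range_dense_of_intertwining H K T DA A DB B lam HT HTdense HAonto).
Qed.
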